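(* Let $U_1,\ldots,U_K$ be mutually commuting unitary operators on a Hilbert space $\mathcal{H}_Q$ of finite dimension $D_Q$. If $U_1,\ldots,U_K$ are unambiguously distinguishable, then $K\le D_Q$.
   Context: A finite list of unitary operators $U_1,\ldots,U_K$ on a finite-dimensional Hilbert space $\mathcal{H}_Q$ is called unambiguously distinguishable if there exist a finite-dimensional Hilbert space $\mathcal{H}_A$ (an ancilla) and a unit vector $|\psi\rangle\in\mathcal{H}_Q\otimes\mathcal{H}_A$ such that the $K$ output vectors $(U_j\otimes\mathbb{1}_A)|\psi\rangle$, $j=1,\ldots,K$, are linearly independent (equivalently, some measurement on the output identifies $j$ with zero error probability and with nonzero success probability for every $j$). *)

From HB Require Import structures.
From mathcomp Require Import all_boot all_order all_algebra.
From mathcomp Require Export mxtens.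
Set Implicit Arguments. Unset Strict Implicit. Unset Printing Implicit Defensive.
Import Order.TTheory GRing.Theory Num.Theory.
Local Open Scope ring_scope.

Definition adjmx (C : numClosedFieldType) m n (A : 'M[C]_(m, n)) : 'M[C]_(n, m) :=
  (map_mx Num.conj A)^T.

Definition unitary_mx (C : numClosedFieldType) n (U : 'M[C]_n) : Prop :=
  U *m adjmx U = 1%:M /\ adjmx U *m U = 1%:M.

Definition lin_indep (C : numClosedFieldType) N K (v : 'I_K -> 'cV[C]_N) : Prop :=
  forall c : 'I_K -> C, \sum_(j < K) c j *: v j = 0 -> forall j, c j = 0.

Definition unit_vec (C : numClosedFieldType) N (psi : 'cV[C]_N) : Prop :=
  adjmx psi *m psi = 1%:M.

(* Unambiguous distinguishability of U_1..U_K on H_Q = C^DQ: there is a finite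
   dimensional ancilla H_A = C^DA and a unit vector psi in H_Q (x) H_A = C^(DQ*DA)
   such that the vectors (U_j (x) 1_A) psi are linearly independent. *)
Definition unamb_dist (C : numClosedFieldType) DQ K (U : 'I_K -> 'M[C]_DQ) : Prop :=
  exists (DA : nat) (psi : 'cV[C]_(DQ * DA)),
    unit_vec psi /\ lin_indep (fun j => (U j *t (1%:M : 'M[C]_DA)) *m psi).

(* The map A |-> (A (x) 1) psi is linear, so unambiguous distinguishability
   makes U_1, ..., U_K linearly independent as matrices.  Unitaries are normal,
   and commuting normal matrices are simultaneously diagonalizable,
   U_j = P^-1 diag(d_j) P; independence then passes to the diagonals d_j,
   which are K independent vectors of C^DQ. *)

From mathcomp Require Import all_boot all_order all_algebra.
Set Implicit Arguments. Unset Strict Implicit. Unset Printing Implicit Defensive.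
Import Order.TTheory GRing.Theory Num.Theory.
Local Open Scope ring_scope.
Local Open Scope sesquilinear_scope.

Section FreeFamily.
Variables (F : fieldType) (V : vectType F).

Lemma free_mktupleP K (v : 'I_K -> V) :
  reflect (forall c, \sum_j c j *: v j = 0 -> forall j, c j = 0)
          (free (mktuple v)).
Proof.
have nthv (j : 'I_K) : (mktuple v)`_j = v j by rewrite -tnth_nth tnth_mktuple.
apply: (iffP freeP) => freev c; last by under eq_bigr do rewrite nthv; apply: freev.
by under [X in X = 0 -> _]eq_bigr do rewrite -nthv; apply: freev.
Qed.

Lemma free_size_leq_dim (X : seq V) : free X -> (size X <= \dim {:V})%N.
Proof. by move=> /eqP <-; exact/dimvS/subvf. Qed.

End FreeFamily.

Lemma codiagonalizable_free_leq (F : fieldType) n K (A : 'I_K -> 'M[F]_n) :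
  codiagonalizable (mktuple A) -> free (mktuple A) -> (K <= n)%N.
Proof.
move=> [P Punit /allP diagA] /free_mktupleP freeA.
have /all_sig[d A_diag] j : {d : 'rV_n | A j = invmx P *m diag_mx d *m P}.
  apply: sig_eqW; rewrite -(tnth_mktuple A j) in diagA *.
  have /(similar_diagLR Punit)[d ->] := diagA _ (mem_tnth j _).
  by exists d; rewrite conjVmx.
suff /free_size_leq_dim : free (mktuple d).
  by rewrite size_tuple dimvf dim_matrix mul1r.
apply/free_mktupleP => c cd0; apply: freeA.
have -> : \sum_j c j *: A j = invmx P *m diag_mx (\sum_j c j *: d j) *m P.
  rewrite linear_sum mulmx_sumr mulmx_suml; apply: eq_bigr => j _.
  by rewrite A_diag linearZ /= scalemxAl scalemxAr.
by rewrite cd0 linear0 mulmx0 mul0mx.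
Qed.

Lemma tensmx_suml (R : pzRingType) K m n p q (c : 'I_K -> R)
    (A : 'I_K -> 'M[R]_(m, n)) (B : 'M[R]_(p, q)) :
  (\sum_j c j *: A j) *t B = \sum_j c j *: (A j *t B).
Proof.
apply/matrixP => i j; rewrite !mxE !summxE mulr_suml; apply: eq_bigr => k _.
by rewrite !mxE mulrA.
Qed.

Section NormalMatrices.
Variable C : numClosedFieldType.

Lemma adjmxE m n (A : 'M[C]_(m, n)) : adjmx A = A ^t*.
Proof. by rewrite /adjmx map_trmx. Qed.

Lemma unitary_normalmx n (U : 'M[C]_n) : unitary_mx U -> U \is normalmx.
Proof.
by rewrite /unitary_mx !adjmxE => -[UUt UtU]; apply/normalmxP; rewrite UUt UtU.
Qed.

Lemma normalmx_diagonalizable n (A : 'M[C]_n) :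
  A \is normalmx -> diagonalizable A.
Proof.
move=> /orthomx_spectralP A_spectral; exists (spectralmx A).
  exact: spectral_unit.
apply/(similar_diagLR (spectral_unit A)); exists (spectral_diag A).
by rewrite conjVmx ?spectral_unit.
Qed.

Lemma comm_normalmx_codiagonalizable n (As : seq 'M[C]_n) :
  {in As &, forall A B, comm_mx A B} -> {in As, forall A, A \is normalmx} ->
  codiagonalizable As.
Proof.
move=> commAs normalAs; apply/codiagonalizableP; split => // A /normalAs.
exact: normalmx_diagonalizable.
Qed.

End NormalMatrices.

Lemma unamb_dist_free (C : numClosedFieldType) DQ K (U : 'I_K -> 'M[C]_DQ) :
  unamb_dist U -> free (mktuple U).
Proof.
move=> [DA [psi [_ indep]]]; apply/free_mktupleP => c cU0; apply: indep.
have -> : \sum_j c j *: ((U j *t (1%:M : 'M_DA)) *m psi)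
    = ((\sum_j c j *: U j) *t (1%:M : 'M_DA)) *m psi.
  by rewrite tensmx_suml mulmx_suml; apply: eq_bigr => j _; rewrite scalemxAl.
by rewrite cU0 tens0mx mul0mx.
Qed.

Theorem corollary1 (C : numClosedFieldType) (DQ K : nat) (U : 'I_K -> 'M[C]_DQ) :
  (forall j, unitary_mx (U j)) ->
  (forall i j, U i *m U j = U j *m U i) ->
  unamb_dist U ->
  (K <= DQ)%N.
Proof.
move=> unitaryU commU /unamb_dist_free freeU.
apply: codiagonalizable_free_leq freeU; apply: comm_normalmx_codiagonalizable.
  by move=> _ _ /tnthP[i ->] /tnthP[j ->]; rewrite !tnth_mktuple; exact: commU.
by move=> _ /tnthP[j ->]; rewrite tnth_mktuple; exact/unitary_normalmx.
Qed.
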